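(* Consider a market with $M$ consumers $\mathcal{M}=\{1,\dots,M\}$ and $N$ suppliers $\mathcal{N}=\{1,\dots,N\}$, constants $d_0>0$, $\kappa_0>0$ with $Md_0<N\kappa_0$. For each $i\in\mathcal{M}$, $U_i$ is concave, strictly increasing and continuously differentiable on $[d_0,\infty)$ with $U_i(d_0)=0$; for each $i\in\mathcal{N}$, $C_i:\mathbb{R}\to\mathbb{R}$ is convex, strictly increasing and continuously differentiable with $C_i(s)\ge0$ for $s\ge0$ and $C_i(s)=0$ for $s\le0$. Define the game $\mathcal{G}$ whose players are $\mathcal{M}\cup\mathcal{N}$; consumer $i$ chooses $\theta_d^i\ge0$ and supplier $i$ chooses $\theta_s^i\ge 0$. For a profile $(\boldsymbol{\theta}_d,\boldsymbol{\theta}_s)$ with $\sum_i\theta_d^i+\sum_i\theta_s^i>0$, the price is $p(\boldsymbol{\theta}_d,\boldsymbol{\theta}_s)=\frac{\sum_i\theta_d^i+\sum_i\theta_s^i}{N\kappa_0-Md_0}$ and the payoffs are $$\pi_d^i=U_i\!\left(d_0+\frac{\theta_d^i}{p}\right)-p\,d_0-\theta_d^i\ (i\in\mathcal{M}),\qquad \pi_s^i=p\,\kappa_0-\theta_s^i-C_i\!\left(\kappa_0-\frac{\theta_s^i}{p}\right)\ (i\in\mathcal{N}),$$ with $p=p(\boldsymbol{\theta}_d,\boldsymbol{\theta}_s)$. If all parameters are zero, by convention each consumer is allocated $d_0$, each supplier $\kappa_0$, and the price is $0$ (so consumer payoffs are $U_i(d_0)=0$ and supplier payoffs are $-C_i(\kappa_0)$).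 Suppose some supplier is pivotal, i.e. $\frac{(N-1)\kappa_0}{Md_0}<1$. Then $\mathcal{G}$ admits no (pure) Nash equilibrium.
   Context: A Nash equilibrium is a profile $(\tilde{\boldsymbol{\theta}}_d,\tilde{\boldsymbol{\theta}}_s)$ of nonnegative parameters such that no consumer and no supplier can strictly increase its own payoff by unilaterally changing its own parameter to another nonnegative value. The quantity $\frac{(N-1)\kappa_0}{Md_0}$ is the residual supply index of a supplier. *)

From Stdlib Require Import Reals Lra.
From Coquelicot Require Import Coquelicot.
Open Scope R_scope.

Fixpoint sumR (n : nat) (f : nat -> R) : R :=
  match n with
  | O => 0
  | S k => sumR k f + f k
  end.

Definition upd (th : nat -> R) (i : nat) (t : R) : nat -> R :=
  fun k => if Nat.eqb k i then t else th k.

Definition concave_on_Ici (f : R -> R) (a : R) : Prop :=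
  forall x y t, a <= x -> a <= y -> 0 <= t <= 1 ->
    t * f x + (1 - t) * f y <= f (t * x + (1 - t) * y).

Definition strict_incr_on_Ici (f : R -> R) (a : R) : Prop :=
  forall x y, a <= x -> x < y -> f x < f y.

Definition C1_on_Ici (f : R -> R) (a : R) : Prop :=
  exists f' : R -> R,
    (forall x, a < x -> is_derive f x (f' x)) /\
    filterlim (fun h => (f (a + h) - f a) / h) (at_right 0) (locally (f' a)) /\
    (forall x, a < x -> continuous f' x) /\
    filterlim f' (at_right a) (locally (f' a)).

Definition convex_R (f : R -> R) : Prop :=
  forall x y t, 0 <= t <= 1 ->
    f (t * x + (1 - t) * y) <= t * f x + (1 - t) * f y.

Definition C1_R (f : R -> R) : Prop :=
  exists f' : R -> R, forall x, is_derive f x (f' x) /\ continuous f' x.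

Definition total_bid (M N : nat) (td ts : nat -> R) : R :=
  sumR M td + sumR N ts.

Definition price (M N : nat) (d0 k0 : R) (td ts : nat -> R) : R :=
  total_bid M N td ts / (INR N * k0 - INR M * d0).

(* Consumer i's payoff; when all parameters are zero (total bid not > 0),
   the allocation is d0 and the price 0, so the payoff is U_i(d0). *)
Definition payoff_d (M N : nat) (d0 k0 : R) (U : nat -> R -> R)
    (td ts : nat -> R) (i : nat) : R :=
  if Rlt_dec 0 (total_bid M N td ts) then
    let p := price M N d0 k0 td ts in
    U i (d0 + td i / p) - p * d0 - td i
  else U i d0.

(* Supplier i's payoff; when all parameters are zero, allocation k0 and
   price 0, so the payoff is - C_i(k0). *)
Definition payoff_s (M N : nat) (d0 k0 : R) (C : nat -> R -> R)
    (td ts : nat -> R) (i : nat) : R :=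
  if Rlt_dec 0 (total_bid M N td ts) then
    let p := price M N d0 k0 td ts in
    p * k0 - ts i - C i (k0 - ts i / p)
  else - C i k0.

Definition is_NE (M N : nat) (d0 k0 : R) (U C : nat -> R -> R)
    (td ts : nat -> R) : Prop :=
  (forall i, (i < M)%nat -> 0 <= td i) /\
  (forall i, (i < N)%nat -> 0 <= ts i) /\
  (forall i, (i < M)%nat -> forall t, 0 <= t ->
      payoff_d M N d0 k0 U (upd td i t) ts i <= payoff_d M N d0 k0 U td ts i) /\
  (forall i, (i < N)%nat -> forall t, 0 <= t ->
      payoff_s M N d0 k0 C td (upd ts i t) i <= payoff_s M N d0 k0 C td ts i).

Definition RSI (M N : nat) (d0 k0 : R) : R :=
  (INR N - 1) * k0 / (INR M * d0).

(* Being pivotal (RSI < 1) means that the price denominator N k0 - M d0 is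
   smaller than a single capacity k0.  If one supplier alone raises its bid t,
   the price p is at least t / (N k0 - M d0), so its revenue p k0 - t grows at
   least like t (k0 / (N k0 - M d0) - 1), a positive multiple of t, while its
   cost never exceeds C(k0) because its supply k0 - t / p stays below k0.  Its
   payoff is thus unbounded in its own bid, so it has no best response. *)
From Stdlib Require Import Reals Lra Lia.
From Coquelicot Require Import Coquelicot.
Open Scope R_scope.

Lemma sumR_ge0 n f : (forall k, (k < n)%nat -> 0 <= f k) -> 0 <= sumR n f.
Proof.
  induction n as [|n IH]; simpl; intros Hf; [lra|].
  assert (0 <= sumR n f) by (apply IH; intros; apply Hf; lia).
  assert (0 <= f n) by (apply Hf; lia).
  lra.
Qed.

Lemma le_sumR n f i : (forall k, (k < n)%nat -> 0 <= f k) ->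
  (i < n)%nat -> f i <= sumR n f.
Proof.
  induction n as [|n IH]; simpl; intros Hf Hi; [lia|].
  destruct (Nat.eq_dec i n) as [->|Hne].
  - assert (0 <= sumR n f) by (apply sumR_ge0; intros; apply Hf; lia). lra.
  - assert (f i <= sumR n f) by (apply IH; [intros; apply Hf; lia | lia]).
    assert (0 <= f n) by (apply Hf; lia).
    lra.
Qed.

Lemma RSI_lt1_excess_lt (M N : nat) (d0 k0 : R) :
  (0 < M)%nat -> 0 < d0 -> RSI M N d0 k0 < 1 ->
  INR N * k0 - INR M * d0 < k0.
Proof.
  intros HM Hd0 Hpivot.
  assert (HMd0 : 0 < INR M * d0) by (apply Rmult_lt_0_compat; [apply lt_0_INR; lia | lra]).
  unfold RSI in Hpivot.
  apply Rmult_lt_compat_r with (r := INR M * d0) in Hpivot; [|exact HMd0].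
  unfold Rdiv in Hpivot.
  rewrite Rmult_assoc, Rinv_l, Rmult_1_r in Hpivot by lra.
  lra.
Qed.

Lemma cost_le_at_capacity (c : R -> R) (k0 s : R) :
  (forall x y, 0 <= x -> x < y -> c x < c y) ->
  (forall x, 0 <= x -> 0 <= c x) ->
  (forall x, x <= 0 -> c x = 0) ->
  0 <= k0 -> s <= k0 -> c s <= c k0.
Proof.
  intros Hincr Hnonneg Hzero Hk0 Hs.
  destruct (Rle_lt_dec s 0) as [Hs0|Hs0].
  - rewrite (Hzero s Hs0). auto.
  - destruct (Req_dec s k0) as [->|Hne]; [lra|].
    left. apply Hincr; lra.
Qed.

Section PivotalSupplier.

Variables (M N : nat) (d0 k0 : R) (C : nat -> R -> R) (td ts : nat -> R).
Hypotheses (Hk0 : 0 < k0) (Hcap : INR M * d0 < INR N * k0).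
Hypotheses (Htd : forall i, (i < M)%nat -> 0 <= td i)
           (Hts : forall i, (i < N)%nat -> 0 <= ts i).

Lemma payoff_s_upd_ge i t :
  (i < N)%nat -> 0 < t ->
  (forall s, s <= k0 -> C i s <= C i k0) ->
  t * (k0 / (INR N * k0 - INR M * d0) - 1) - C i k0
    <= payoff_s M N d0 k0 C td (upd ts i t) i.
Proof.
  intros Hi Ht Hcost.
  set (D := INR N * k0 - INR M * d0).
  assert (HD : 0 < D) by (unfold D; lra).
  assert (Hupd : forall k, (k < N)%nat -> 0 <= upd ts i t k).
  { intros k Hk. unfold upd. destruct (Nat.eqb k i); [lra | auto]. }
  assert (Hti : upd ts i t i = t) by (unfold upd; rewrite Nat.eqb_refl; reflexivity).
  assert (Hbid : t <= total_bid M N td (upd ts i t)).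
  { unfold total_bid. rewrite <- Hti at 1.
    pose proof (le_sumR N (upd ts i t) i Hupd Hi).
    pose proof (sumR_ge0 M td Htd). lra. }
  unfold payoff_s.
  destruct (Rlt_dec 0 (total_bid M N td (upd ts i t))) as [_|Hneg]; [|lra].
  unfold price. fold D. rewrite Hti.
  set (T := total_bid M N td (upd ts i t)) in *.
  assert (Hp : 0 < T / D) by (apply Rdiv_lt_0_compat; lra).
  assert (Hrev : t * (k0 / D) <= T / D * k0).
  { replace (t * (k0 / D)) with (t / D * k0) by (field; lra).
    apply Rmult_le_compat_r; [lra|].
    apply Rmult_le_compat_r; [left; apply Rinv_0_lt_compat|]; lra. }
  assert (Hsupply : 0 <= t / (T / D)) by (apply Rdiv_le_0_compat; lra).
  pose proof (Hcost (k0 - t / (T / D)) ltac:(lra)).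
  lra.
Qed.

Lemma payoff_s_unbounded i :
  (i < N)%nat -> INR N * k0 - INR M * d0 < k0 ->
  (forall s, s <= k0 -> C i s <= C i k0) ->
  forall P, exists t, 0 <= t /\ P < payoff_s M N d0 k0 C td (upd ts i t) i.
Proof.
  intros Hi Hpivot Hcost P.
  set (D := INR N * k0 - INR M * d0) in *.
  assert (HD : 0 < D) by (unfold D; lra).
  assert (Ha : 0 < k0 / D - 1).
  { replace (k0 / D - 1) with ((k0 - D) / D) by (field; lra).
    apply Rdiv_lt_0_compat; lra. }
  set (t := (Rabs P + Rabs (C i k0) + 1) / (k0 / D - 1)).
  assert (Hgain : t * (k0 / D - 1) = Rabs P + Rabs (C i k0) + 1)
    by (unfold t; field; lra).
  assert (Ht : 0 < t).
  { apply Rdiv_lt_0_compat; [|lra].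
    pose proof (Rabs_pos P); pose proof (Rabs_pos (C i k0)); lra. }
  exists t; split; [lra|].
  pose proof (payoff_s_upd_ge i t Hi Ht Hcost) as Hge. fold D in Hge.
  pose proof (Rle_abs P); pose proof (Rle_abs (C i k0)).
  lra.
Qed.

End PivotalSupplier.

Theorem lemma1 (M N : nat) (d0 k0 : R) (U C : nat -> R -> R)
  (HM : (0 < M)%nat)
  (Hd0 : 0 < d0) (Hk0 : 0 < k0)
  (Hcap : INR M * d0 < INR N * k0)
  (HU_conc : forall i, (i < M)%nat -> concave_on_Ici (U i) d0)
  (HU_incr : forall i, (i < M)%nat -> strict_incr_on_Ici (U i) d0)
  (HU_C1 : forall i, (i < M)%nat -> C1_on_Ici (U i) d0)
  (HU_0 : forall i, (i < M)%nat -> U i d0 = 0)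
  (HC_conv : forall i, (i < N)%nat -> convex_R (C i))
  (HC_incr : forall i, (i < N)%nat -> forall x y, 0 <= x -> x < y -> C i x < C i y)
  (HC_C1 : forall i, (i < N)%nat -> C1_R (C i))
  (HC_nonneg : forall i, (i < N)%nat -> forall s, 0 <= s -> 0 <= C i s)
  (HC_zero : forall i, (i < N)%nat -> forall s, s <= 0 -> C i s = 0)
  (Hpivot : RSI M N d0 k0 < 1) :
  ~ (exists td ts : nat -> R, is_NE M N d0 k0 U C td ts).
Proof.
  intros [td [ts [Htd [Hts [_ Hbest]]]]].
  assert (HN : (0 < N)%nat).
  { destruct N; [|lia]. pose proof (pos_INR M). simpl in Hcap. nra. }
  assert (Hcost : forall s, s <= k0 -> C 0%nat s <= C 0%nat k0)
    by (intros s Hs; apply cost_le_at_capacity; auto; lra).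
  destruct (payoff_s_unbounded M N d0 k0 C td ts Hk0 Hcap Htd Hts 0 HN
              (RSI_lt1_excess_lt M N d0 k0 HM Hd0 Hpivot) Hcost
              (payoff_s M N d0 k0 C td ts 0)) as [t [Ht Hgain]].
  specialize (Hbest 0%nat HN t Ht).
  lra.
Qed.
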